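(* Let $f:\mathcal{P}_2(H)\to U$ and $X_0\in L^2(\Omega,H)$ with $\mu_0=\mathcal{L}(X_0)=\sum_{k=1}^Np_k\delta_{x_k}$, $x_1,\dots,x_N\in H$ distinct, $p_k>0$, $\sum_kp_k=1$. Assume the lift $\hat f(X)=f(\mathcal{L}(X))$ is Fréchet differentiable at $X_0$ with $D\hat f(X_0)\in\Lambda_2^{\mathbb{P}}(H,U)$; let $m(A)u:=D\hat f(X_0)(u\mathbf{1}_A)$ and $m_{\mu_0}(B):=m(\{X_0\in B\})$ for Borel $B\subset H$. Then $$\frac{dm_{\mu_0}}{d\mu_0}(x):=\sum_{k=1}^N\frac{m_{\mu_0}(\{x_k\})}{\mu_0(\{x_k\})}\mathbf{1}_{\{x_k\}}(x)$$ satisfies $\mathbb{E}\big[\mathbf{1}_A\frac{dm_{\mu_0}}{d\mu_0}(X_0)\big]=m(A)$ for all $A\in\mathcal{F}$ (Bochner integral in $L(H,U)$).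
   Context: $(\Omega,\mathcal{F},\mathbb{P})$ is a complete atomless probability space, $\Omega$ Polish with Borel $\sigma$-field; $H,U$ separable real Hilbert spaces; $L(H,U)$ with operator norm. For bounded linear $L:L^2(\Omega,H)\to U$, $|\!|\!|L|\!|\!|_{2,\mathbb{P}}:=\sup\{\sum_i\|L(\mathbf{1}_{A_i}x_i)\|_U:A_i\in\mathcal{F}$ pairwise disjoint, $x_i\in H$, $\mathbb{E}\|\sum_i\mathbf{1}_{A_i}x_i\|_H^2\le1\}$, and $\Lambda_2^{\mathbb{P}}(H,U)$ is the set of such $L$ with finite norm; for such $L$, $A\mapsto L(\cdot\,\mathbf{1}_A)$ is a vector measure $\mathcal{F}\to L(H,U)$. *)

From HB Require Import structures.
From mathcomp Require Import all_boot all_order all_algebra.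
From mathcomp Require Import all_classical all_reals all_analysis.
Set Implicit Arguments. Unset Strict Implicit. Unset Printing Implicit Defensive.
Import Order.TTheory GRing.Theory Num.Theory.
Import numFieldNormedType.Exports.
Local Open Scope classical_set_scope.
Local Open Scope ring_scope.

Section Defs.
Variable R : realType.

Definition is_inner_product (V : normedModType R) (ip : V -> V -> R) : Prop :=
  (forall x y, ip x y = ip y x) /\
  (forall (a : R) x y z, ip (a *: x + y) z = a * ip x z + ip y z) /\
  (forall x, ip x x = `|x| ^+ 2).

Definition separable_space (V : normedModType R) : Prop :=
  exists D : set V, countable D /\ closure D = setT.

Definition separable_hilbert (V : completeNormedModType R) : Prop :=
  (exists ip : V -> V -> R, is_inner_product ip) /\ separable_space V.

Definition is_metric (T : Type) (dist : T -> T -> R) : Prop :=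
  (forall x y, 0 <= dist x y) /\ (forall x y, dist x y = 0 <-> x = y) /\
  (forall x y, dist x y = dist y x) /\
  (forall x y z, dist x z <= dist x y + dist y z).

Definition metric_open (T : Type) (dist : T -> T -> R) (O : set T) : Prop :=
  forall x, O x -> exists e : R, 0 < e /\ forall y, dist x y < e -> O y.

Definition metric_complete (T : Type) (dist : T -> T -> R) : Prop :=
  forall u : nat -> T,
    (forall e : R, 0 < e -> exists N, forall n m, (N <= n)%N -> (N <= m)%N ->
        dist (u n) (u m) < e) ->
    exists l, forall e : R, 0 < e -> exists N, forall n, (N <= n)%N -> dist (u n) l < e.

Definition metric_separable (T : Type) (dist : T -> T -> R) : Prop :=
  exists D : set T, countable D /\
    forall x (e : R), 0 < e -> exists y, D y /\ dist x y < e.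

Definition metric_borel (T : Type) (dist : T -> T -> R) : set (set T) :=
  <<s [set O | metric_open dist O] >>.

(* (Omega, F, P): Omega Polish, F = P-completion of its Borel sigma-field,
   P complete and atomless *)
Definition polish_completed_borel d (T : measurableType d)
    (P : probability T R) : Prop :=
  exists dist : T -> T -> R,
    [/\ is_metric dist, metric_complete dist, metric_separable dist,
        (forall B, metric_borel dist B -> measurable B) &
        (forall A, measurable A -> exists B N,
            [/\ metric_borel dist B, metric_borel dist N, P N = 0%E &
                ((A `\` B) `|` (B `\` A)) `<=` N])].

Definition complete_prob d (T : measurableType d) (P : probability T R) : Prop :=
  forall N, measurable N -> P N = 0%E -> forall M, M `<=` N -> measurable M.

Definition atomless_prob d (T : measurableType d) (P : probability T R) : Prop :=
  forall A, measurable A -> (0 < P A)%E ->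
    exists B, [/\ measurable B, B `<=` A, (0 < P B)%E & (P B < P A)%E].

Definition borelH (V : normedModType R) : set (set V) :=
  <<s [set O : set V | open O] >>.

Definition measH d (T : measurableType d) (V : normedModType R) (X : T -> V) : Prop :=
  forall B : set V, borelH B -> measurable (X @^-1` B).

Definition inL2 d (T : measurableType d) (P : probability T R)
    (V : normedModType R) (X : T -> V) : Prop :=
  measH X /\ (\int[P]_w ((`|X w| ^+ 2)%:E) < +oo)%E.

Definition L2norm d (T : measurableType d) (P : probability T R)
    (V : normedModType R) (X : T -> V) : R :=
  Num.sqrt (fine (\int[P]_w ((`|X w| ^+ 2)%:E))).

(* law of X: the pushforward set function on Borel sets of H
   (set to 0 on non-Borel sets, which carry no information) *)
Definition lawH d (T : measurableType d) (P : probability T R)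
    (V : normedModType R) (X : T -> V) : set V -> \bar R :=
  fun B => if `[< borelH B >] then P (X @^-1` B) else 0%E.

Definition indv (T : Type) (V : normedModType R) (A : set T) (u : V) : T -> V :=
  fun w => if `[< A w >] then u else 0.

Definition is_frechet_derivative_L2 d (T : measurableType d) (P : probability T R)
    (V W : normedModType R) (F : (T -> V) -> W) (X0 : T -> V)
    (D : (T -> V) -> W) : Prop :=
  (forall (a : R) X Y, inL2 P X -> inL2 P Y ->
      D (fun w => a *: X w + Y w) = a *: D X + D Y) /\
  (exists C : R, forall Y, inL2 P Y -> `|D Y| <= C * L2norm P Y) /\
  (forall e : R, 0 < e -> exists del : R, 0 < del /\
     forall Y, inL2 P Y -> L2norm P Y < del ->
       `|F (fun w => X0 w + Y w) - F X0 - D Y| <= e * L2norm P Y).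

Definition Lambda2 d (T : measurableType d) (P : probability T R)
    (V W : normedModType R) (L : (T -> V) -> W) : Prop :=
  exists C : R, forall s : seq (set T * V),
    (forall i, (i < size s)%N -> measurable (nth (set0, 0) s i).1) ->
    (forall i j, (i < size s)%N -> (j < size s)%N -> i <> j ->
        (nth (set0, 0) s i).1 `&` (nth (set0, 0) s j).1 = set0) ->
    L2norm P (fun w => \sum_(p <- s) indv p.1 p.2 w) <= 1 ->
    \sum_(p <- s) `|L (indv p.1 p.2)| <= C.

Definition bounded_linear (V W : normedModType R) (c : V -> W) : Prop :=
  (forall (a : R) x y, c (a *: x + y) = a *: c x + c y) /\
  exists C : R, forall x, `|c x| <= C * `|x|.

Definition opnorm (V W : normedModType R) (c : V -> W) : R :=
  sup [set `|c u| | u in [set u : V | `|u| <= 1]].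

(* s is the simple function sum_i c_i 1_{B_i} (B_i in F, c_i in L(H,U))
   and v = sum_i P(B_i) c_i is its integral *)
Definition simple_op_integral d (T : measurableType d) (P : probability T R)
    (V W : normedModType R) (s : T -> V -> W) (v : V -> W) : Prop :=
  exists r : seq (set T * (V -> W)),
    [/\ (forall p, p \in r -> measurable p.1 /\ bounded_linear p.2),
        s = (fun w u => \sum_(p <- r) (if `[< p.1 w >] then p.2 u else 0)) &
        v = (fun u => \sum_(p <- r) fine (P p.1) *: p.2 u)].

Definition bochner_integral_op d (T : measurableType d) (P : probability T R)
    (V W : normedModType R) (h : T -> V -> W) (v : V -> W) : Prop :=
  bounded_linear v /\
  exists (s : nat -> T -> V -> W) (vs : nat -> V -> W),
    [/\ (forall n, simple_op_integral P (s n) (vs n)),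
        (forall e : R, 0 < e -> exists N, forall n, (N <= n)%N ->
           (\int[P]_w ((opnorm (fun u => s n w u - h w u))%:E) <= e%:E)%E) &
        (forall e : R, 0 < e -> exists N, forall n, (N <= n)%N ->
           opnorm (fun u => vs n u - v u) <= e)].

End Defs.

(* The level sets E_k = {X0 = x_k} cover Omega up to a null set, so it is
   enough to show that S |-> D(u 1_S) is proportional to P on the subsets of
   each E_k.  If B, B' are disjoint subsets of E_k of equal mass, the laws of
   X0 + t u (1_B - 1_B') and X0 - t u (1_B - 1_B') coincide, so the lift takes
   the same value at both points and Frechet differentiability forces
   D(u 1_B) = D(u 1_B').  Thus S |-> D(u 1_S) is additive, invariant under
   exchanging disjoint sets of equal mass, and O(sqrt P(S)); on an atomless
   space (Sierpinski's intermediate value theorem) such a set function is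
   proportional to P.  The density is then a simple function, which is its
   own Bochner approximation. *)

From HB Require Import structures.
From mathcomp Require Import all_boot all_order all_algebra.
From mathcomp Require Import all_classical all_reals all_analysis.
From mathcomp Require Import lra.
Import Order.TTheory GRing.Theory Num.Theory.
Import numFieldNormedType.Exports.
Local Open Scope classical_set_scope.
Local Open Scope ring_scope.
Set Implicit Arguments. Unset Strict Implicit.
Unset Printing Implicit Defensive.

Section FiniteProbability.
Variables (R : realType) (d : measure_display) (T : measurableType d)
  (P : probability T R).

Definition Pr (S : set T) : R := fine (P S).

Lemma PrE S : measurable S -> P S = (Pr S)%:E.
Proof. by move=> mS; rewrite /Pr fineK // fin_num_measure. Qed.

Lemma Pr0 : Pr set0 = 0.
Proof. by rewrite /Pr measure0. Qed.

Lemma Pr_ge0 S : 0 <= Pr S.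
Proof. exact/fine_ge0/measure_ge0. Qed.

Lemma Pr_le1 S : measurable S -> Pr S <= 1.
Proof. by move=> mS; rewrite -lee_fin -PrE //; exact: probability_le1. Qed.

Lemma sqrt_Pr_le1 S : measurable S -> Num.sqrt (Pr S) <= 1.
Proof. by move=> mS; rewrite -sqrtr1 ler_wsqrtr // Pr_le1. Qed.

Lemma Pr_le A B : measurable A -> measurable B -> A `<=` B -> Pr A <= Pr B.
Proof.
by move=> mA mB AB; rewrite -lee_fin -!PrE //; apply: le_measure; rewrite ?inE.
Qed.

Lemma PrC S : measurable S -> Pr (~` S) = 1 - Pr S.
Proof.
move=> mS; apply: EFin_inj; rewrite -PrE; last exact: measurableC.
by rewrite probability_setC // PrE.
Qed.

End FiniteProbability.

Section AdditiveSetFunction.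
Variables (d : measure_display) (T : measurableType d) (V : zmodType)
  (phi : set T -> V).

Definition disjoint_additive := forall A B, measurable A -> measurable B ->
  A `&` B = set0 -> phi (A `|` B) = phi A + phi B.

Hypothesis phiU : disjoint_additive.

Lemma additive_set0 : phi set0 = 0.
Proof.
have := phiU measurable0 measurable0 (setI0 set0); rewrite setU0 => h.
by apply: (addrI (phi set0)); rewrite addr0 -h.
Qed.

Lemma additive_setID A B : measurable A -> measurable B ->
  phi A = phi (A `&` B) + phi (A `\` B).
Proof.
move=> mA mB; rewrite -phiU ?setUIDK //.
- exact: measurableI.
- exact: measurableD.
by rewrite setDE setIACA setICr setI0.
Qed.

Lemma additiveB A B : measurable A -> measurable B -> B `<=` A ->
  phi (A `\` B) = phi A - phi B.
Proof.
move=> mA mB BA.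
by rewrite (additive_setID mA mB) (setIidr BA) addrAC subrr add0r.
Qed.

Lemma additive_big_setU (I : choiceType) (s : seq I) (F : I -> set T) :
  uniq s -> (forall i, measurable (F i)) ->
  (forall i j, i != j -> F i `&` F j = set0) ->
  phi (\big[setU/set0]_(i <- s) F i) = \sum_(i <- s) phi (F i).
Proof.
move=> + mF dF; elim: s => [|i s IHs] /=.
  by rewrite !big_nil additive_set0.
case/andP=> i_s s_uniq; rewrite !big_cons phiU ?IHs //.
- exact: bigsetU_measurable.
- rewrite -bigcup_seq; apply/seteqP; split=> // w [Fiw [j /= js Fjw]].
  have ij : i != j by apply: contraNneq i_s => ->.
  by have /seteqP[/(_ w) Fij _] := dF i j ij; apply: Fij.
Qed.

End AdditiveSetFunction.

Lemma Pr_additive (R : realType) (d : measure_display) (T : measurableType d)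
  (P : probability T R) : disjoint_additive (Pr P).
Proof.
move=> A B mA mB AB; apply: EFin_inj.
by rewrite EFinD -!PrE ?measureU //; exact: measurableU.
Qed.

Section Atomless.
Variables (R : realType) (d : measure_display) (T : measurableType d)
  (P : probability T R).
Hypothesis atomless : atomless_prob P.

Local Notation Pr := (Pr P).

Lemma atomless_halve A : measurable A -> 0 < Pr A ->
  exists B, [/\ measurable B, B `<=` A, 0 < Pr B & Pr B * 2 <= Pr A].
Proof.
move=> mA A_gt0; have [|B [mB BA]] := atomless mA; first by rewrite PrE.
rewrite !PrE // !lte_fin => B_gt0 BA_lt.
have [small|big] := lerP (Pr B * 2) (Pr A); first by exists B.
have PrAB : Pr (A `\` B) = Pr A - Pr B by exact: (additiveB (Pr_additive P)).
exists (A `\` B); split; [exact: measurableD|by move=> w []|lra|lra].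
Qed.

Lemma atomless_small A e : measurable A -> 0 < Pr A -> 0 < e ->
  exists B, [/\ measurable B, B `<=` A, 0 < Pr B & Pr B < e].
Proof.
move=> mA A_gt0 e_gt0.
have halves n : exists B, [/\ measurable B, B `<=` A, 0 < Pr B &
    Pr B * 2 ^+ n <= Pr A].
  elim: n => [|n [B [mB BA B_gt0 leB]]].
    by exists A; split; rewrite // expr0 mulr1.
  have [C [mC CB C_gt0 leC]] := atomless_halve mB B_gt0.
  exists C; split => //; first exact: subset_trans BA.
  by rewrite exprS mulrA (le_trans _ leB) // ler_wpM2r // exprn_ge0.
have := archi_boundP (divr_ge0 (Pr_ge0 P A) (ltW e_gt0)).
set n := Num.Def.archi_bound _ => ltn.
have [B [mB BA B_gt0 leB]] := halves n; exists B; split => //.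
have n_lt2n : (n%:R : R) < 2 ^+ n by rewrite -natrX ltr_nat ltn_expl.
rewrite ltr_pdivrMr // in ltn.
have := exprn_gt0 n (ltr0Sn R 1); nra.
Qed.

Section Sierpinski.
Variables (A : set T) (c : R).
Hypotheses (mA : measurable A) (c_ge0 : 0 <= c) (c_le : c <= Pr A).

Definition fits B C := [/\ measurable C, C `<=` A `\` B & Pr B + Pr C <= c].

Lemma fits_half B : Pr B <= c ->
  exists C, fits B C /\ forall C', fits B C' -> Pr C' <= 2 * Pr C.
Proof.
move=> Bc; pose E := [set Pr C | C in fits B].
have fits0 : fits B set0 by split; rewrite ?Pr0 ?addr0.
have hasE : has_sup E.
  split; first by exists 0, set0; last exact: Pr0.
  by exists 1 => _ [C [mC _ _] <-]; exact: Pr_le1.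
have [s_gt0|s_le0] := ltrP 0 (sup E).
  have [_ [C fitC <-] ltC] := sup_adherent (ltac:(lra) : 0 < sup E / 2) hasE.
  exists C; split => // C' fitC'.
  have := sup_upper_bound hasE (ex_intro2 _ _ C' fitC' erefl); lra.
exists set0; split => // C' fitC'.
have := sup_upper_bound hasE (ex_intro2 _ _ C' fitC' erefl).
by rewrite Pr0; lra.
Qed.

Variable F : set T -> set T.
Hypothesis F_half : forall B, Pr B <= c ->
  fits B (F B) /\ forall C', fits B C' -> Pr C' <= 2 * Pr (F B).

Let Bs n := iter n (fun B => B `|` F B) set0.

Let Bs_fits n : [/\ measurable (Bs n), Bs n `<=` A,
  Pr (Bs n) = \sum_(i < n) Pr (F (Bs i)) & Pr (Bs n) <= c].
Proof.
elim: n => [|n [mB BA PrB Bc]]; first by rewrite big_ord0 /Bs /= Pr0; split.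
have [[mF FA BFc] _] := F_half Bc.
have BF0 : Bs n `&` F (Bs n) = set0.
  by apply/seteqP; split => // w [Bw /FA[]].
rewrite /= Pr_additive // big_ord_recr -PrB; split => //.
- exact: measurableU.
- by move=> w [/BA|/FA[]].
Qed.

Let Bs_nondecreasing : {homo Bs : n m / (n <= m)%N >-> (n <= m)%O}.
Proof.
move=> n m /subnKC <-; apply/subsetPset; elim: (m - n)%N => [|k IH].
  by rewrite addn0.
by rewrite addnS => w /IH Bw; left.
Qed.

Let bigcup_Bs_le : Pr (\bigcup_n Bs n) <= c.
Proof.
have mBs n : measurable (Bs n) by case: (Bs_fits n).
have mB : measurable (\bigcup_n Bs n) by exact: bigcupT_measurable.
have cvgB := nondecreasing_cvg_mu (mu := P) mBs mB Bs_nondecreasing.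
rewrite -lee_fin -PrE // -(cvg_lim _ cvgB) //.
apply: lime_le; first by apply/cvg_ex; eexists; exact: cvgB.
by apply: nearW => n /=; rewrite PrE // lee_fin; case: (Bs_fits n).
Qed.

(* If the union fell short of [c], a small set of positive mass outside it
   would fit at every stage, so every greedy increment would be at least
   half its mass: impossible for increments of total mass at most [c]. *)
Lemma greedy_bigcup_Pr : let B := \bigcup_n Bs n in
  [/\ measurable B, B `<=` A & Pr B = c].
Proof.
have mB : measurable (\bigcup_n Bs n).
  by apply: bigcupT_measurable => n; case: (Bs_fits n).
have BA : \bigcup_n Bs n `<=` A.
  by move=> w [n _]; case: (Bs_fits n) => _ + _ _; apply.
split => //; set B := \bigcup_n Bs n.
apply/eqP; rewrite eq_le bigcup_Bs_le /=; rewrite -subr_le0 leNgt; apply/negP.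
move=> cB_gt0; have mAB : measurable (A `\` B) by exact: measurableD.
have [|C [mC CAB C_gt0 C_lt]] := atomless_small mAB _ cB_gt0.
  rewrite (additiveB (Pr_additive P)) // subr_gt0.
  by apply: lt_le_trans c_le; rewrite -subr_gt0.
have C_le n : Pr C <= 2 * Pr (F (Bs n)).
  have [mBn _ _ /F_half[_ half]] := Bs_fits n; apply: half; split => //.
    by move=> w /CAB[Aw Bw]; split => // ?; apply: Bw; exists n.
  have BnB : Bs n `<=` B by exact: bigcup_sup.
  by have := Pr_le P mBn mB BnB; lra.
have nC_le n : n%:R * Pr C <= 2 * c.
  have : \sum_(i < n) Pr C <= \sum_(i < n) 2 * Pr (F (Bs i)).
    by apply: ler_sum => i _; exact: C_le.
  rewrite sumr_const card_ord -mulr_sumr mulr_natl.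
  by have [_ _ <- Bc_n] := Bs_fits n; lra.
have := archi_boundP (divr_ge0 (mulr_ge0 (ler0n R 2) c_ge0) (ltW C_gt0)).
by rewrite ltr_pdivrMr // ltNge nC_le.
Qed.

End Sierpinski.

Lemma atomless_intermediate A c : measurable A -> 0 <= c -> c <= Pr A ->
  exists B, [/\ measurable B, B `<=` A & Pr B = c].
Proof.
move=> mA c_ge0 c_le.
have greedy B : exists C, Pr B <= c ->
    fits A c B C /\ forall C', fits A c B C' -> Pr C' <= 2 * Pr C.
  have [Bc|] := pselect (Pr B <= c); last by exists set0.
  by have [C ?] := @fits_half A c B Bc; exists C.
have [F F_half] := choice greedy.
by eexists; exact: (greedy_bigcup_Pr mA c_ge0 c_le F_half).
Qed.

End Atomless.

Lemma borelH_set1 (R : realType) (V : normedModType R) (y : V) : borelH [set y].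
Proof.
rewrite /borelH -[[set y]]setCK; apply: sigma_algebraC.
apply: sub_sigma_algebra.
apply: closed_openC; apply: accessible_closed_set1; apply: hausdorff_accessible.
exact: norm_hausdorff.
Qed.

Section IndicatorVector.
Variables (R : realType) (d : measure_display) (T : measurableType d)
  (P : probability T R) (V : normedModType R).

Lemma indvT (S : set T) (v : V) w : S w -> indv S v w = v.
Proof. by move=> Sw; rewrite /indv asboolT. Qed.

Lemma indvF (S : set T) (v : V) w : ~ S w -> indv S v w = 0.
Proof. by move=> Sw; rewrite /indv asboolF. Qed.

Lemma measH_cst (v : V) : measH (fun _ : T => v).
Proof.
move=> B _; have [Bv|Bv] := pselect (B v).
  by rewrite preimage_cst ifT //; exact/asboolP.
by rewrite preimage_cst ifF //; exact/asboolP.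
Qed.

Lemma measH_if (S : set T) (Y1 Y2 : T -> V) : measurable S ->
  measH Y1 -> measH Y2 -> measH (fun w => if `[< S w >] then Y1 w else Y2 w).
Proof.
move=> mS mY1 mY2 B bB.
have -> : (fun w => if `[< S w >] then Y1 w else Y2 w) @^-1` B =
    (S `&` Y1 @^-1` B) `|` (~` S `&` Y2 @^-1` B).
  apply/seteqP; split=> w; rewrite /preimage /=; case: asboolP => Sw.
  - by left.
  - by right.
  - by case=> -[].
  - by case=> -[].
apply: measurableU; apply: measurableI => //; [exact: mY1|exact: measurableC|].
exact: mY2.
Qed.

Lemma measH_indv (S : set T) (v : V) : measurable S -> measH (indv S v).
Proof. by move=> mS; apply: measH_if => //; exact: measH_cst. Qed.

Lemma integral_sqr_norm_indv (S : set T) (v : V) : measurable S ->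
  (\int[P]_w ((`|indv S v w| ^+ 2)%:E) = (`|v| ^+ 2 * Pr P S)%:E)%E.
Proof.
move=> mS; have -> : (fun w => (`|indv S v w| ^+ 2)%:E) =
    (fun w => (`|v| ^+ 2)%:E * (\1_S w)%:E)%E.
  apply/funext => w; rewrite indicE -EFinM.
  have [Sw|nSw] := pselect (S w); first by rewrite indvT // mem_set // mulr1.
  by rewrite indvF // memNset // mulr0 normr0 expr0n.
rewrite ge0_integralZl_EFin //.
- by rewrite integral_indic // setIT [RHS]EFinM /Pr fineK // fin_num_measure.
- apply/measurable_realfun.measurable_EFinP.
  exact: measurable_realfun.measurable_indic.
Qed.

Lemma inL2_indv (S : set T) (v : V) : measurable S -> inL2 P (indv S v).
Proof.
by move=> mS; split; [exact: measH_indv|rewrite integral_sqr_norm_indv // ltry].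
Qed.

Lemma L2norm_indv (S : set T) (v : V) : measurable S ->
  L2norm P (indv S v) = `|v| * Num.sqrt (Pr P S).
Proof.
move=> mS; rewrite /L2norm integral_sqr_norm_indv //=.
by rewrite sqrtrM ?sqrtr_sqr ?normr_id.
Qed.

Lemma inL2_eq_norm (Y Y' : T -> V) : measH Y -> (forall w, `|Y w| = `|Y' w|) ->
  inL2 P Y' -> inL2 P Y.
Proof.
by move=> mY YY' [_ fin]; split => //; under eq_integral do rewrite YY'.
Qed.

Lemma L2norm_eq_norm (Y Y' : T -> V) : (forall w, `|Y w| = `|Y' w|) ->
  L2norm P Y = L2norm P Y'.
Proof. by move=> YY'; rewrite /L2norm; under eq_integral do rewrite YY'. Qed.

End IndicatorVector.

Section FrechetDerivative.
Variables (R : realType) (d : measure_display) (T : measurableType d)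
  (P : probability T R) (H U : normedModType R)
  (F : (T -> H) -> U) (X0 : T -> H) (D : (T -> H) -> U).
Hypothesis dF : is_frechet_derivative_L2 P F X0 D.

Local Notation Pr := (Pr P).

Let D_lin a X Y : inL2 P X -> inL2 P Y ->
  D (fun w => a *: X w + Y w) = a *: D X + D Y.
Proof. by case: dF => lin _; exact: lin. Qed.

Let inL2_0 : inL2 P (fun _ : T => 0 : H).
Proof.
have -> : (fun _ : T => 0 : H) = indv set0 0.
  by apply/funext => w; rewrite indvF.
exact: inL2_indv.
Qed.

Lemma frechet0 : D (fun _ => 0) = 0.
Proof.
have := D_lin 1 inL2_0 inL2_0; rewrite !scale1r.
have -> : (fun _ : T => 0 + 0 : H) = (fun _ => 0).
  by apply/funext => w; rewrite addr0.
by move=> D00; apply: (addrI (D (fun _ => 0))); rewrite addr0 -D00.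
Qed.

Lemma frechetZ a X : inL2 P X -> D (fun w => a *: X w) = a *: D X.
Proof.
move=> X2; have := D_lin a X2 inL2_0; rewrite frechet0 addr0.
by under eq_fun do rewrite addr0.
Qed.

Lemma frechetD X Y : inL2 P X -> inL2 P Y -> D (fun w => X w + Y w) = D X + D Y.
Proof.
move=> X2 Y2; have := D_lin 1 X2 Y2; rewrite scale1r.
by under eq_fun do rewrite scale1r.
Qed.

Lemma frechetB X Y : inL2 P X -> inL2 P Y -> D (fun w => X w - Y w) = D X - D Y.
Proof.
move=> X2 Y2; have := D_lin (-1) Y2 X2; rewrite scaleN1r addrC => <-.
by congr D; apply/funext => w; rewrite scaleN1r addrC.
Qed.

Lemma frechet_indv_sqrt_bound (v : H) : exists K, forall S, measurable S ->
  `|D (indv S v)| <= K * Num.sqrt (Pr S).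
Proof.
case: dF => _ [[C bound] _]; exists (C * `|v|) => S mS.
by rewrite -mulrA -L2norm_indv //; exact/bound/inL2_indv.
Qed.

Lemma frechet_indv_null (S : set T) (v : H) : measurable S -> Pr S = 0 ->
  D (indv S v) = 0.
Proof.
move=> mS S0; have [K bound] := frechet_indv_sqrt_bound v.
by apply/eqP; rewrite -normr_le0; have := bound S mS; rewrite S0 sqrtr0 mulr0.
Qed.

Lemma frechet_indv_additive (v : H) : disjoint_additive (fun S => D (indv S v)).
Proof.
move=> A B mA mB AB /=; rewrite -frechetD; [congr D|exact: inL2_indv..].
apply/funext => w; have [Aw|nAw] := pselect (A w).
  have nBw : ~ B w by exact: (disjoints_subset A B).1 AB w Aw.
  by rewrite indvT; [rewrite indvT // indvF // addr0|left].
have [Bw|nBw] := pselect (B w).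
  by rewrite indvT; [rewrite indvF // indvT // add0r|right].
by rewrite !indvF ?addr0 // => -[].
Qed.

Lemma frechet_indv_bounded_linear (S : set T) : measurable S ->
  bounded_linear (fun v : H => D (indv S v)).
Proof.
move=> mS; split=> [a v v'|].
  rewrite -D_lin; [congr D; apply/funext => w|exact: inL2_indv..].
  by rewrite /indv; case: asboolP; rewrite // scaler0 addr0.
case: dF => _ [[C bound] _]; exists `|C| => v.
apply: le_trans (bound _ (inL2_indv P v mS)) _; rewrite L2norm_indv //.
apply: le_trans (ler_wpM2r _ (ler_norm C)) _.
  by rewrite mulr_ge0 ?sqrtr_ge0.
by rewrite ler_wpM2l // ler_piMr // sqrt_Pr_le1.
Qed.

(* If [F] takes the same value at [X0 + t Z] and [X0 - t Z], the two first
   order expansions at [X0] differ by [2 t D Z = o(t)]. *)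
Lemma frechet_even_direction (Z : T -> H) (c : R) :
  (forall t, inL2 P (fun w => t *: Z w)) ->
  (forall t, L2norm P (fun w => t *: Z w) <= `|t| * c) ->
  (forall t, F (fun w => X0 w + t *: Z w) = F (fun w => X0 w + (- t) *: Z w)) ->
  D Z = 0.
Proof.
move=> tZ2 tZ_le F_even.
have Z2 : inL2 P Z by have := tZ2 1; under eq_fun do rewrite scale1r.
have c_ge0 : 0 <= c.
  by have := tZ_le 1; rewrite normr1 mul1r; apply: le_trans; exact: sqrtr_ge0.
apply/normr0_eq0/eqP; rewrite eq_le normr_ge0 andbT.
apply/ler_addgt0Pr => e e_gt0; rewrite add0r.
case: dF => _ [_ /(_ (e / (c + 1)))[|del [del_gt0 expand]]].
  by rewrite divr_gt0 // ltr_wpDl.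
pose t := del / (c + 1).
have t_gt0 : 0 < t by rewrite divr_gt0 // ltr_wpDl.
have L2_lt s : `|s| = t -> L2norm P (fun w => s *: Z w) < del.
  move=> st; apply: le_lt_trans (tZ_le s) _; rewrite st /t.
  by rewrite mulrAC ltr_pdivrMr ?ltr_wpDl // ltr_pM2l //; lra.
have [nt nNt] : `|t| = t /\ `|- t| = t by rewrite normrN gtr0_norm.
have := expand _ (tZ2 t) (L2_lt t nt).
have := expand _ (tZ2 (- t)) (L2_lt (- t) nNt).
rewrite -F_even !frechetZ //.
set a := F _; set b := F X0; move=> expandN expandP.
have L2t := tZ_le t; have L2Nt := tZ_le (- t).
rewrite nt in L2t; rewrite nNt in L2Nt.
have : `|(t + t) *: D Z| <= e / (c + 1) * (t * c + t * c).
  have -> : (t + t) *: D Z = (a - b - (- t) *: D Z) - (a - b - t *: D Z).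
    by rewrite scaleNr opprK opprB addrCA addrAC subrr add0r scalerDl.
  apply: le_trans (ler_normB _ _) (le_trans (lerD expandN expandP) _).
  by rewrite -mulrDr ler_pM2l ?divr_gt0 ?ltr_wpDl //; exact: lerD.
rewrite normrZ gtr0_norm ?addr_gt0 // => ineq.
have e_eq : e / (c + 1) * (c + 1) = e by rewrite divfK // gt_eqF // ltr_wpDl.
set k := e / (c + 1) in ineq e_eq.
have k_ge0 : 0 <= k by rewrite divr_ge0 ?ltW ?ltr_wpDl.
have : `|D Z| <= k * c.
  by rewrite -(ler_pM2l (addr_gt0 t_gt0 t_gt0)); apply: le_trans ineq _; nra.
nra.
Qed.

Lemma frechet_indv_partition (I : choiceType) (s : seq I) (E : I -> set T)
    (A : set T) (v : H) :
  uniq s -> measurable A -> (forall i, measurable (E i)) ->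
  (forall i j, i != j -> E i `&` E j = set0) -> \sum_(i <- s) Pr (E i) = 1 ->
  D (indv A v) = \sum_(i <- s) D (indv (A `&` E i) v).
Proof.
move=> s_uniq mA mE dE sumE; set Es := \big[setU/set0]_(i <- s) E i.
have mEs : measurable Es by exact: bigsetU_measurable.
have PrEs : Pr Es = 1 by rewrite (additive_big_setU (Pr_additive P)).
have AEs : A `&` Es = \big[setU/set0]_(i <- s) (A `&` E i).
  by rewrite /Es -!bigcup_seq setI_bigcupr.
have PrAEs : Pr (A `\` Es) = 0.
  apply/eqP; rewrite eq_le Pr_ge0 andbT -(subrr 1) -[X in _ - X]PrEs -PrC //.
  apply: Pr_le; [apply: measurableD => //|exact: measurableC|by move=> w []].
rewrite (additive_setID (frechet_indv_additive v) mA mEs) AEs.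
rewrite (frechet_indv_null v (measurableD mA mEs) PrAEs) addr0.
apply: (additive_big_setU (frechet_indv_additive v)) => //.
- by move=> i; exact: measurableI.
- by move=> i j ij; rewrite setIACA (dE i j ij) setI0.
Qed.

End FrechetDerivative.

Lemma set_cstE (T : Type) (b : Prop) :
  [set _ : T | b] = if `[< b >] then setT else set0.
Proof. by case: asboolP => [bT|bF]; apply/seteqP; split. Qed.

Section DipoleShift.
Variables (R : realType) (d : measure_display) (T : measurableType d)
  (P : probability T R) (H : normedModType R) (X0 : T -> H) (x0 u : H).
Hypothesis mX0 : measH X0.

Lemma preimage_dipole_shift (B B' : set T) (t : R) (S : set H) :
  measurable B -> measurable B' -> B `&` B' = set0 ->
  B `<=` X0 @^-1` [set x0] -> B' `<=` X0 @^-1` [set x0] -> borelH S ->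
  P ((fun w => X0 w + t *: (indv B u w - indv B' u w)) @^-1` S) =
  (P (B `&` [set _ | S (x0 + t *: u)%R])
   + P (B' `&` [set _ | S (x0 - t *: u)%R])
   + P (~` (B `|` B') `&` X0 @^-1` S))%E.
Proof.
move=> mB mB' BB' BX0 B'X0 bS.
have nB'B : B `<=` ~` B' by exact/disjoints_subset.
have m_cst (b : Prop) : measurable [set _ : T | b].
  by rewrite set_cstE; case: asboolP.
have mB1 := measurableI _ _ mB (m_cst (S (x0 + t *: u))).
have mB2 := measurableI _ _ mB' (m_cst (S (x0 - t *: u))).
have mC : measurable (~` (B `|` B') `&` X0 @^-1` S).
  by apply: measurableI; [exact/measurableC/measurableU|exact: mX0].
rewrite -!measureU //; first 1 last.
- exact: measurableU.
- apply/seteqP; split=> // w [[[Bw _]|[B'w _]] [nBB _]]; apply: nBB.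
  + by left.
  + by right.
- by apply/seteqP; split=> // w [[Bw _] [B'w _]]; exact: nB'B _ Bw B'w.
congr (P _); apply/seteqP; split=> w; rewrite /preimage /=.
- have [Bw|nBw] := pselect (B w).
    rewrite (indvT u Bw) (indvF u (nB'B _ Bw)) subr0 (BX0 _ Bw).
    by left; left.
  have [B'w|nB'w] := pselect (B' w).
    rewrite (indvF u nBw) (indvT u B'w) sub0r scalerN (B'X0 _ B'w).
    by left; right.
  rewrite (indvF u nBw) (indvF u nB'w) subr0 scaler0 addr0.
  by right; split=> // -[].
- case=> [[[Bw Su]|[B'w Su]]|[nBB' Sw]].
  + by rewrite (indvT u Bw) (indvF u (nB'B _ Bw)) subr0 (BX0 _ Bw).
  + have nBw : ~ B w by move=> /nB'B; apply.
    by rewrite (indvF u nBw) (indvT u B'w) sub0r scalerN (B'X0 _ B'w).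
  + have [nBw nB'w] : ~ B w /\ ~ B' w by split=> ?; apply: nBB'; [left|right].
    by rewrite (indvF u nBw) (indvF u nB'w) subr0 scaler0 addr0.
Qed.

(* Exchanging [B] and [B'] inside the level set [X0 = x0] only exchanges the
   two atoms [x0 + t u] and [x0 - t u], which carry the same mass. *)
Lemma lawH_dipole_swap (B B' : set T) (t : R) :
  measurable B -> measurable B' -> B `&` B' = set0 ->
  B `<=` X0 @^-1` [set x0] -> B' `<=` X0 @^-1` [set x0] -> Pr P B = Pr P B' ->
  lawH P (fun w => X0 w + t *: (indv B u w - indv B' u w)) =
  lawH P (fun w => X0 w + t *: (indv B' u w - indv B u w)).
Proof.
move=> mB mB' BB' BX0 B'X0 PrBB'; apply/funext => S; rewrite /lawH.
have B'B : B' `&` B = set0 by rewrite setIC.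
case: asboolP => // bS; rewrite !preimage_dipole_shift //.
have PBB' : P B = P B' by rewrite (PrE P mB) (PrE P mB') PrBB'.
rewrite !set_cstE setUC.
by do 2 case: asboolP => _; rewrite ?setIT ?setI0 ?PBB'.
Qed.

End DipoleShift.

Section AtomlessInvariantAdditive.
Variables (R : realType) (d : measure_display) (T : measurableType d)
  (P : probability T R) (V : normedModType R) (E : set T) (g : set T -> V)
  (C : R).
Hypotheses (atomless : atomless_prob P) (mE : measurable E).
Hypothesis E_gt0 : 0 < Pr P E.
Hypotheses (gU : disjoint_additive g) (gE : g E = 0).
Hypothesis g_swap : forall A B, measurable A -> measurable B ->
  A `<=` E -> B `<=` E -> A `&` B = set0 -> Pr P A = Pr P B -> g A = g B.
Hypothesis g_bound : forall A, measurable A -> A `<=` E ->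
  `|g A| <= C * Num.sqrt (Pr P A).

Local Notation Pr := (Pr P).

Let g_invariant A B : measurable A -> measurable B -> A `<=` E -> B `<=` E ->
  Pr A = Pr B -> g A = g B.
Proof.
move=> mA mB AE BE PrAB.
rewrite (additive_setID gU mA mB) (additive_setID gU mB mA) setIC.
congr (_ + _); apply: g_swap.
- exact: measurableD.
- exact: measurableD.
- by move=> w [/AE].
- by move=> w [/BE].
- by apply/seteqP; split=> // w [[_ nBw] [Bw _]].
- move: PrAB; rewrite (additive_setID (Pr_additive P) mA mB).
  by rewrite (additive_setID (Pr_additive P) mB mA) setIC => /addrI.
Qed.

Let g_multiple (Q : set T) (j : nat) A : measurable Q -> Q `<=` E ->
  measurable A -> A `<=` E -> Pr A = j%:R * Pr Q -> g A = g Q *+ j.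
Proof.
move=> mQ QE; elim: j A => [|j IHj] A mA AE PrA.
  rewrite (g_invariant mA measurable0 AE (sub0set E)) ?(additive_set0 gU) //.
  by rewrite PrA Pr0 mulr0n mul0r.
have [|A1 [mA1 A1A PrA1]] := atomless_intermediate atomless mA (Pr_ge0 P Q).
  by rewrite PrA -[leLHS]mul1r ler_wpM2r ?Pr_ge0 // ler1n.
have A1E : A1 `<=` E by move=> w /A1A /AE.
rewrite (additive_setID gU mA mA1) (setIidr A1A) (g_invariant mA1 mQ) //.
rewrite (IHj (A `\` A1)) ?mulrS //; first exact: measurableD.
  by move=> w [/AE].
by rewrite (additiveB (Pr_additive P)) // PrA PrA1 -natr1 mulrDl mul1r addrK.
Qed.

Let C_ge0 : 0 <= C.
Proof.
have := g_bound mE (@subset_refl _ E); rewrite gE normr0.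
by rewrite pmulr_lge0 // sqrtr_gt0.
Qed.

(* Cut [E] into [n] pieces of mass [q]: they all have the same [g], which
   must vanish since they add up to [g E = 0]; so [g S] is the [g] of a
   remainder of mass less than [q]. *)
Let g_small n S : (0 < n)%N -> measurable S -> S `<=` E ->
  `|g S| <= C * Num.sqrt (Pr E / n%:R).
Proof.
move=> n_gt0 mS SE; set q := Pr E / n%:R.
have q_gt0 : 0 < q by rewrite divr_gt0 // ltr0n.
have [|Q [mQ QE PrQ]] := atomless_intermediate atomless mE (ltW q_gt0).
  by rewrite ler_pdivrMr ?ltr0n // ler_peMr ?Pr_ge0 // ler1n.
have gQ : g Q = 0.
  have PrE_n : Pr E = n%:R * Pr Q by rewrite PrQ mulrC divfK // gt_eqF ?ltr0n.
  move: (g_multiple mQ QE mE (@subset_refl _ E) PrE_n); rewrite gE => /esym/eqP.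
  by rewrite -scaler_nat scaler_eq0 pnatr_eq0 eqn0Ngt n_gt0 => /eqP.
have /andP[trunc_le trunc_lt] := truncn_itv (divr_ge0 (Pr_ge0 P S) (ltW q_gt0)).
set j := Num.truncn _ in trunc_le trunc_lt.
rewrite ler_pdivlMr // in trunc_le; rewrite ltr_pdivrMr // in trunc_lt.
have [|S1 [mS1 S1S PrS1]] := atomless_intermediate atomless mS _ trunc_le.
  exact: mulr_ge0 (ler0n _ _) (ltW q_gt0).
have mSS1 : measurable (S `\` S1) by exact: measurableD.
rewrite (additive_setID gU mS mS1) (setIidr S1S).
rewrite (g_multiple (j := j) mQ QE mS1 (fun w Sw => SE _ (S1S _ Sw))) ?PrQ //.
rewrite gQ mul0rn add0r; apply: le_trans (g_bound mSS1 _) _.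
  by move=> w [/SE].
apply/(ler_wpM2l C_ge0)/ler_wsqrtr.
rewrite (additiveB (Pr_additive P)) // PrS1.
by move: trunc_lt; rewrite -natr1 mulrDl mul1r; lra.
Qed.

Lemma atomless_invariant_additive_eq0 S : measurable S -> S `<=` E -> g S = 0.
Proof.
move=> mS SE; apply/normr0_eq0/eqP; rewrite eq_le normr_ge0 andbT.
apply/ler_addgt0Pr => e e_gt0; rewrite add0r.
pose r := e / (C + 1).
have r_gt0 : 0 < r by rewrite divr_gt0 // ltr_wpDl.
have ratio_ge0 := divr_ge0 (Pr_ge0 P E) (ltW (exprn_gt0 2 r_gt0)).
have := archi_boundP ratio_ge0; set n := Num.Def.archi_bound _ => n_gt.
have n_gt0 : (0 < n)%N by rewrite -(ltr0n R) (le_lt_trans ratio_ge0 n_gt).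
apply: le_trans (g_small n_gt0 mS SE) _.
have sqrt_lt : Num.sqrt (Pr E / n%:R) < r.
  rewrite -[r]ger0_norm ?ltW // -sqrtr_sqr ltr_sqrt ?exprn_gt0 //.
  by rewrite ltr_pdivrMr ?ltr0n // mulrC -ltr_pdivrMr ?exprn_gt0.
have r_eq : r * (C + 1) = e by rewrite divfK // gt_eqF // ltr_wpDl.
have := sqrtr_ge0 (Pr E / n%:R); nra.
Qed.

End AtomlessInvariantAdditive.

Lemma atomless_additive_proportional (R : realType) (d : measure_display)
  (T : measurableType d) (P : probability T R) (V : normedModType R)
  (E : set T) (phi : set T -> V) (K : R) :
  atomless_prob P -> measurable E -> 0 < Pr P E -> disjoint_additive phi ->
  (forall A B, measurable A -> measurable B -> A `<=` E -> B `<=` E ->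
     A `&` B = set0 -> Pr P A = Pr P B -> phi A = phi B) ->
  (forall A, measurable A -> A `<=` E -> `|phi A| <= K * Num.sqrt (Pr P A)) ->
  forall S, measurable S -> S `<=` E -> phi S = (Pr P S / Pr P E) *: phi E.
Proof.
move=> atomless mE E_gt0 phiU phi_swap phi_bound S mS SE; apply/eqP.
rewrite -subr_eq0; apply/eqP.
pose g A := phi A - (Pr P A / Pr P E) *: phi E.
apply: (@atomless_invariant_additive_eq0 _ _ _ P _ E g (K + `|phi E| / Pr P E));
  rewrite //.
- move=> A B mA mB AB; rewrite /g phiU // (Pr_additive P) // mulrDl scalerDl.
  by rewrite opprD addrACA.
- by rewrite /g divff ?gt_eqF // scale1r subrr.
- by move=> A B mA mB AE BE AB PrAB; rewrite /g PrAB (phi_swap A B).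
move=> A mA AE; rewrite /g mulrDl.
apply: le_trans (ler_normB _ _) (lerD (phi_bound A mA AE) _).
have Pr_le_sqrt : Pr P A <= Num.sqrt (Pr P A).
  rewrite -{1}(sqr_sqrtr (Pr_ge0 P A)) expr2.
  by rewrite ler_piMl ?sqrtr_ge0 ?sqrt_Pr_le1.
rewrite normrZ ger0_norm ?divr_ge0 ?Pr_ge0 //.
rewrite [leLHS]mulrC [leLHS]mulrA [leLHS]mulrAC.
by apply: ler_wpM2l => //; rewrite divr_ge0 ?Pr_ge0.
Qed.

Lemma preimage_set1_disjoint (A B : Type) (X : A -> B) (y z : B) : y <> z ->
  X @^-1` [set y] `&` X @^-1` [set z] = set0.
Proof.
by move=> yz; apply/seteqP; split=> // w [/= Xy Xz]; apply: yz; rewrite -Xy.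
Qed.

Section LawLift.
Variables (R : realType) (d : measure_display) (T : measurableType d)
  (P : probability T R) (H U : normedModType R)
  (f : (set H -> \bar R) -> U) (X0 : T -> H) (D : (T -> H) -> U).
Hypotheses (mX0 : measH X0)
  (dF : is_frechet_derivative_L2 P (fun X => f (lawH P X)) X0 D).

Lemma frechet_indv_swap (x0 u : H) (B B' : set T) :
  measurable B -> measurable B' -> B `&` B' = set0 ->
  B `<=` X0 @^-1` [set x0] -> B' `<=` X0 @^-1` [set x0] -> Pr P B = Pr P B' ->
  D (indv B u) = D (indv B' u).
Proof.
move=> mB mB' BB' BX0 B'X0 PrBB'.
have nB'B : B `<=` ~` B' by exact/disjoints_subset.
pose Z w := indv B u w - indv B' u w.
have tZE t : (fun w => t *: Z w) =
    (fun w => if `[< B w >] then t *: u else indv B' (- (t *: u)) w).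
  apply/funext => w; rewrite /Z /indv; case: asboolP => [Bw|nBw].
    by rewrite asboolF ?subr0 //; exact: nB'B.
  by case: asboolP; rewrite sub0r ?oppr0 ?scalerN ?scaler0.
have tZ_norm t w : `|t *: Z w| = `|indv (B `|` B') (t *: u) w|.
  rewrite (congr1 (@^~ w) (tZE t)) /indv /=.
  case: asboolP => [Bw|nBw]; first by rewrite asboolT //; left.
  case: asboolP => [B'w|nB'w]; first by rewrite asboolT ?normrN //; right.
  by rewrite asboolF // => -[].
have mBB' : measurable (B `|` B') by exact: measurableU.
have tZ2 t : inL2 P (fun w => t *: Z w).
  apply: (inL2_eq_norm _ (tZ_norm t)); last exact: inL2_indv.
  by rewrite tZE; apply: measH_if => //; [exact: measH_cst|exact: measH_indv].
have tZ_le t : L2norm P (fun w => t *: Z w) <= `|t| * `|u|.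
  rewrite (L2norm_eq_norm _ (tZ_norm t)) L2norm_indv // normrZ.
  by rewrite ler_piMr ?mulr_ge0 // sqrt_Pr_le1.
have F_even t : f (lawH P (fun w => X0 w + t *: Z w)) =
    f (lawH P (fun w => X0 w + (- t) *: Z w)).
  rewrite (lawH_dipole_swap u mX0 t mB mB' BB' BX0 B'X0 PrBB').
  congr (f (lawH P _)).
  by apply/funext => w; rewrite /Z scaleNr -scalerN opprB.
apply/eqP; rewrite -subr_eq0 -(frechetB dF); [|exact: inL2_indv..].
by rewrite (frechet_even_direction dF tZ2 tZ_le F_even).
Qed.

Lemma frechet_indv_level_set (x0 u : H) (S : set T) :
  atomless_prob P -> 0 < Pr P (X0 @^-1` [set x0]) ->
  measurable S -> S `<=` X0 @^-1` [set x0] ->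
  D (indv S u) = (Pr P S / Pr P (X0 @^-1` [set x0])) *:
                 D (indv (X0 @^-1` [set x0]) u).
Proof.
move=> atomless E_gt0; have [K bound] := frechet_indv_sqrt_bound dF u.
apply: (atomless_additive_proportional atomless _ E_gt0
  (frechet_indv_additive dF u)); first exact: mX0 (borelH_set1 x0).
- by move=> A B mA mB AE BE AB PrAB /=; exact: frechet_indv_swap AE BE PrAB.
- by move=> A mA _ /=; exact: bound.
Qed.

Lemma frechet_indv_disintegration (N : nat) (x : 'I_N -> H) (A : set T)
    (u : H) :
  atomless_prob P -> injective x ->
  (forall k, 0 < Pr P (X0 @^-1` [set x k])) ->
  \sum_(k < N) Pr P (X0 @^-1` [set x k]) = 1 -> measurable A ->
  D (indv A u) = \sum_(k < N) Pr P (A `&` X0 @^-1` [set x k]) *: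
    ((Pr P (X0 @^-1` [set x k]))^-1 *: D (indv (X0 @^-1` [set x k]) u)).
Proof.
move=> atomless x_inj E_gt0 sumE mA.
have mE k : measurable (X0 @^-1` [set x k]) := mX0 (borelH_set1 (x k)).
rewrite (frechet_indv_partition dF u (index_enum_uniq _) mA mE) //.
  apply: eq_bigr => k _; rewrite scalerA.
  apply: (frechet_indv_level_set u atomless (E_gt0 k)).
    exact: measurableI.
  by move=> w [].
by move=> i j ij; apply: preimage_set1_disjoint => /x_inj/eqP; apply/negP.
Qed.

End LawLift.

Lemma Pr_level_set_discrete_law (R : realType) (d : measure_display)
  (T : measurableType d) (P : probability T R) (H : normedModType R)
  (X0 : T -> H) (N : nat) (x : 'I_N -> H) (p : 'I_N -> R) :
  injective x ->
  (forall B, borelH B ->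
     lawH P X0 B = (\sum_(k < N) (p k * (x k \in B)%:R))%:E) ->
  forall k, Pr P (X0 @^-1` [set x k]) = p k.
Proof.
move=> x_inj law k; have := law _ (borelH_set1 (x k)).
rewrite /lawH asboolT; last exact: borelH_set1.
rewrite /Pr => ->.
rewrite /= (bigD1 k) //= mem_set // mulr1 big1 ?addr0 // => j jk.
by rewrite memNset ?mulr0 // => /x_inj /eqP; rewrite (negbTE jk).
Qed.

Lemma bounded_linearZ (R : realType) (V W : normedModType R) (g : V -> W)
  (a : R) : bounded_linear g -> bounded_linear (fun u => a *: g u).
Proof.
case=> lin [C bound]; split=> [b u v|].
  by rewrite lin scalerDr !scalerA mulrC.
by exists (`|a| * C) => u; rewrite normrZ -mulrA ler_wpM2l.
Qed.

Lemma opnorm0 (R : realType) (V W : normedModType R) :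
  opnorm (fun _ : V => (0 : W)) = 0.
Proof.
rewrite /opnorm normr0 (_ : [set _ | _ in _] = [set 0]) ?sup1 //.
by apply/seteqP; split=> [r [u _ <-]|r ->] //; exists 0; rewrite /= ?normr0.
Qed.

Lemma bochner_integral_op_simple (R : realType) (d : measure_display)
  (T : measurableType d) (P : probability T R) (V W : normedModType R)
  (s : T -> V -> W) (v : V -> W) :
  bounded_linear v -> simple_op_integral P s v -> bochner_integral_op P s v.
Proof.
move=> lin_v simple_s; split => //; exists (fun _ => s), (fun _ => v).
have opnorm_subrr (g : V -> W) : opnorm (fun u => g u - g u) = 0.
  by under eq_fun do rewrite subrr; exact: opnorm0.
split=> // e e_gt0; exists 0%N => n _; last by rewrite opnorm_subrr ltW.
by rewrite integral0_eq ?lee_fin ?ltW // => w _; rewrite opnorm_subrr.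
Qed.

Unset Implicit Arguments.

Theorem lemma3p4 (R : realType) (d : measure_display) (T : measurableType d)
  (P : probability T R) (H U : completeNormedModType R)
  (f : (set H -> \bar R) -> U) (X0 : T -> H)
  (N : nat) (x : 'I_N -> H) (p : 'I_N -> R)
  (D : (T -> H) -> U) :
  polish_completed_borel P -> complete_prob P -> atomless_prob P ->
  separable_hilbert H -> separable_hilbert U ->
  inL2 P X0 ->
  injective x -> (forall k, 0 < p k) -> \sum_(k < N) p k = 1 ->
  (forall B, borelH B ->
     lawH P X0 B = (\sum_(k < N) (p k * (x k \in B)%:R))%:E) ->
  is_frechet_derivative_L2 P (fun X => f (lawH P X)) X0 D ->
  Lambda2 P D ->
  let m := fun (A : set T) (u : H) => D (indv A u) in
  let m_mu0 := fun (B : set H) => m (X0 @^-1` B) in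
  let mu0 := lawH P X0 in
  let dm_dmu0 := fun (y : H) (u : H) =>
     \sum_(k < N) ((fine (mu0 [set x k]))^-1 *: m_mu0 [set x k] u)
                   *+ (y == x k) in
  forall A : set T, measurable A ->
    bochner_integral_op P
      (fun w u => if `[< A w >] then dm_dmu0 (X0 w) u else 0) (m A).
Proof.
move=> _ _ atomless _ _ [mX0 _] x_inj p_gt0 p_sum law_X0 dF _.
move=> m m_mu0 mu0 dm A mA.
pose E k := X0 @^-1` [set x k].
have mE k : measurable (E k) := mX0 _ (borelH_set1 (x k)).
have PrE k : Pr P (E k) = p k := Pr_level_set_discrete_law x_inj law_X0 k.
have mu0E k : fine (mu0 [set x k]) = Pr P (E k).
  by rewrite /mu0 /lawH asboolT //; exact: borelH_set1.
apply: bochner_integral_op_simple.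
  exact: (frechet_indv_bounded_linear dF mA).
exists [seq (A `&` E k, fun u => (Pr P (E k))^-1 *: m (E k) u)
       | k <- index_enum 'I_N]; split.
- move=> _ /mapP[k _ ->]; split; first exact: measurableI.
  exact/bounded_linearZ/(frechet_indv_bounded_linear dF).
- apply/funext => w; apply/funext => u; rewrite big_map /dm /m_mu0 /m.
  case: asboolP => Aw; last first.
    by rewrite big1 // => k _; rewrite asboolF // => -[].
  apply: eq_bigr => k _; rewrite mu0E /=.
  by case: eqP => [X0w|nX0w]; [rewrite asboolT|rewrite asboolF // => -[]].
- apply/funext => u; rewrite big_map /m.
  apply: (frechet_indv_disintegration mX0 dF u atomless x_inj) => //.
  + by move=> k; rewrite PrE.
  + by rewrite -p_sum; apply: eq_bigr => k _; exact: PrE.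
Qed.
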